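(* Let $F$, $G$, $\pi$, $\Pi$ be as in the context, and let $\Pi_1\colon\Sigma_N\times I\to\Sigma_N$ and $\Pi_1^A\colon\Sigma_A\times I\to\Sigma_A$ be the projections onto the first coordinate. Then $\pi\circ\Pi_1^A=\Pi_1\circ\Pi$. Moreover, if $\lambda_0$ is a Borel probability on $\Sigma_N$, $\lambda$ is a Borel probability on $\Sigma_A$ with $\pi_*\lambda=\lambda_0$, and $\mu$ is an ergodic $G$-invariant probability on $\Sigma_A\times I$ with $(\Pi_1^A)_*\mu=\lambda$, then $\Pi_*\mu$ is an ergodic $F$-invariant probability on $\Sigma_N\times I$ and $(\Pi_1)_*(\Pi_*\mu)=\lambda_0$.
   Context: $I=[0,1]$, $R(x)=1-x$. $F(\xi,p)=(\sigma(\xi),f_{\xi_0}(p))$ on $\Sigma_N\times I$, $\Sigma_N=\{1,\ldots,N\}^{\mathbb Z}$, with $f_i$ $C^1$-diffeomorphisms onto their images. $\mathcal I_P$ / $\mathcal I_R$: indices of orientation preserving / reversing $f_i$. $A=(a_{ij})_{i,j=1}^{2N}$ with $a_{ij}=1$ if ($i\in\mathcal I_P$, $j\le N$), or ($i\in\mathcal I_R$, $j>N$), or ($i-N\in\mathcal I_P$, $j>N$), or ($i-N\in\mathcal I_R$, $j\le N$), else $0$; $\Sigma_A$ the $A$-admissible sequences in $\{1,\ldots,2N\}^{\mathbb Z}$ with shift $\sigma_A$; $\pi(\omega)_n=\overline{\omega_n}$ ($\overline i=i$ for $i\le N$, $\overline i=i-N$ otherwise). $G(\omega,x)=(\sigma_A(\omega),g_{\omega_0}(x))$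 with $g_i=f_i$, $g_{i+N}=R\circ f_i\circ R$ ($i\in\mathcal I_P$), $g_i=R\circ f_i$, $g_{i+N}=f_i\circ R$ ($i\in\mathcal I_R$). $C=\{\omega\colon\omega_0\le N\}$; $\Pi(\omega,x)=(\pi(\omega),x)$ if $\omega\in C$, $(\pi(\omega),R(x))$ otherwise. *)

From HB Require Import structures.
From mathcomp Require Import all_boot all_order all_algebra.
From mathcomp Require Import all_classical all_reals all_analysis.

Set Implicit Arguments.
Unset Strict Implicit.
Unset Printing Implicit Defensive.

Import Order.TTheory GRing.Theory Num.Theory.
Import numFieldNormedType.Exports.

Local Open Scope classical_set_scope.
Local Open Scope ring_scope.

(* Alphabets.  N = n.+1 >= 1.  The symbol i : 'I_N stands for the paper's    *)
(* symbol i+1 in {1,...,N}.  The alphabet {1,...,2N} of Sigma_A is encoded  *)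
(* as 'I_N + 'I_N : inl i stands for i+1 (<= N), inr i stands for i+1+N.    *)

Definition Alph (n : nat) : Type := 'I_n.+1.
HB.instance Definition _ n := Choice.on (Alph n).
HB.instance Definition _ n := isPointed.Build (Alph n) (@ord0 n).

Definition Alph2 (n : nat) : Type := ('I_n.+1 + 'I_n.+1)%type.
HB.instance Definition _ n := Choice.on (Alph2 n).
HB.instance Definition _ n := isPointed.Build (Alph2 n) (inl (@ord0 n)).

Definition bar (n : nat) (a : Alph2 n) : Alph n :=
  match a with inl i => i | inr i => i end.

(* Full shift spaces S^Z with the Borel sigma-algebra of the product         *)
(* topology (discrete alphabet), i.e. the sigma-algebra generated by the     *)
(* elementary cylinders [x_k = a].                                           *)

Definition cylinders (S : pointedType) : set (set (int -> S)) :=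
  [set A | exists (k : int) (a : S), A = [set x | x k = a]].

Definition fullshift (S : pointedType) := g_sigma_algebraType (@cylinders S).

Definition SigmaN (n : nat) := fullshift (Alph n).

Definition shiftN (n : nat) (xi : SigmaN n) : SigmaN n := fun k => xi (k + 1)%R.

Definition Itv01 (R : realType) : Type := {x : R | (0 <= x <= 1)%R}.

HB.instance Definition _ (R : realType) := Choice.on (Itv01 R).

Lemma zero_in01 (R : realType) : (0 <= (0 : R) <= 1)%R.
Proof. by rewrite lexx ler01. Qed.

HB.instance Definition _ (R : realType) :=
  isPointed.Build (Itv01 R) (exist _ 0 (zero_in01 R)).

Definition I01 (R : realType) :=
  g_sigma_algebra_preimageType (fun x : Itv01 R => sval x : R).

Lemma one_minus_in01 (R : realType) (x : I01 R) :
  (0 <= (1 - sval x : R) <= 1)%R.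
Proof.
case: x => x /= /andP[x0 x1].
by rewrite subr_ge0 x1 /= lerBlDr lerDl x0.
Qed.

Definition Refl (R : realType) (x : I01 R) : I01 R :=
  exist _ (1 - sval x) (one_minus_in01 x).

Definition C1_diffeo_onto_image (R : realType) (f : I01 R -> I01 R) : Prop :=
  exists g : R -> R,
    (forall x : R, derivable g x 1) /\
    continuous (derive1 g) /\
    (forall x : R, (0 <= x <= 1)%R -> derive1 g x != 0) /\
    (forall x : I01 R, sval (f x) = g (sval x)).

Definition orientation_preserving (R : realType) (f : I01 R -> I01 R) : Prop :=
  forall x y : I01 R, (sval x < sval y)%R -> (sval (f x) < sval (f y))%R.

Definition IP (R : realType) (n : nat) (f : Alph n -> I01 R -> I01 R) :
  Alph n -> bool :=
  fun i => `[< orientation_preserving (f i) >].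

Definition Aentry (n : nat) (P : Alph n -> bool) (a b : Alph2 n) : bool :=
  match a, b with
  | inl i, inl _ => P i
  | inl i, inr _ => ~~ P i
  | inr i, inr _ => P i
  | inr i, inl _ => ~~ P i
  end.

Definition admissible (n : nat) (P : Alph n -> bool) (w : int -> Alph2 n) :
  bool := `[< forall k : int, Aentry P (w k) (w (k + 1)%R) >].

Definition SAtype (n : nat) (P : Alph n -> bool) : Type :=
  {w : int -> Alph2 n | admissible P w}.

HB.instance Definition _ n P := Choice.on (@SAtype n P).

Definition SApoint_seq (n : nat) (P : Alph n -> bool) : int -> Alph2 n :=
  if P ord0 then fun _ => inl ord0
  else fun k => if odd (absz k) then inr ord0 else inl ord0.

Lemma odd_absz_succ (k : int) : odd (absz (k + 1)%R) = ~~ odd (absz k).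
Proof.
case: k => m.
  by rewrite -PoszD addn1 /=.
rewrite NegzE.
have -> : (- (m.+1)%:Z + 1)%R = - (m%:Z).
  by rewrite -addn1 PoszD opprD addrNK.
by rewrite !abszN /= negbK.
Qed.

Lemma SApoint_adm (n : nat) (P : Alph n -> bool) :
  admissible P (SApoint_seq P).
Proof.
apply/asboolP => k; rewrite /SApoint_seq.
case: ifP => P0 /=; first by rewrite P0.
rewrite odd_absz_succ; case: (odd (absz k)) => /=; by rewrite P0.
Qed.

HB.instance Definition _ n P :=
  isPointed.Build (@SAtype n P) (exist _ (SApoint_seq P) (SApoint_adm P)).

Definition fullshift2 (n : nat) := fullshift (Alph2 n).

Definition SigmaA (n : nat) (P : Alph n -> bool) :=
  g_sigma_algebra_preimageType (fun w : SAtype P => (sval w : fullshift2 n)).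

Lemma admissible_shift (n : nat) (P : Alph n -> bool) (w : SigmaA P) :
  admissible P (fun k => sval w (k + 1)%R).
Proof.
case: w => w /= /asboolP aw; apply/asboolP => k; exact: aw.
Qed.

Definition shiftA (n : nat) (P : Alph n -> bool) (w : SigmaA P) : SigmaA P :=
  exist _ (fun k => sval w (k + 1)%R) (admissible_shift w).

Definition piA (n : nat) (P : Alph n -> bool) (w : SigmaA P) : SigmaN n :=
  fun k => bar (sval w k).

Section Maps.
Variables (R : realType) (n : nat) (f : Alph n -> I01 R -> I01 R).

Definition Fmap (z : SigmaN n * I01 R) : SigmaN n * I01 R :=
  (shiftN z.1, f (z.1 0%R) z.2).

Definition gmap (a : Alph2 n) : I01 R -> I01 R :=
  match a with
  | inl i => if IP f i then f i else @Refl R \o f i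
  | inr i => if IP f i then @Refl R \o f i \o @Refl R else f i \o @Refl R
  end.

Definition Gmap (z : SigmaA (IP f) * I01 R) : SigmaA (IP f) * I01 R :=
  (shiftA z.1, gmap (sval z.1 0%R) z.2).

Definition inC (w : SigmaA (IP f)) : bool :=
  if sval w 0%R is inl _ then true else false.

Definition PiMap (z : SigmaA (IP f) * I01 R) : SigmaN n * I01 R :=
  if inC z.1 then (piA z.1, z.2) else (piA z.1, @Refl R z.2).

End Maps.

Definition measure_invariant d (T : measurableType d) (R : realType)
  (Tm : T -> T) (mu : set T -> \bar R) : Prop :=
  forall A : set T, measurable A -> mu (Tm @^-1` A) = mu A.

Definition measure_ergodic d (T : measurableType d) (R : realType)
  (Tm : T -> T) (mu : set T -> \bar R) : Prop :=
  forall A : set T, measurable A -> Tm @^-1` A = A ->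
    mu A = 0%E \/ mu A = 1%E.

(* Pi is a measurable semiconjugacy from G to F: Pi (G z) = F (Pi z).  The
   second letter w_1 of an admissible word tells whether the fibre coordinate
   of G z is stored reflected, and admissibility of w_0 w_1 makes this agree
   with the orientation of f_(w_0) and the reflection already applied at z.
   Preimages under Pi of F-invariant sets are then G-invariant, so invariance
   and ergodicity pass from mu to Pi_* mu; and Pi commutes with the projections
   to the base, which gives the base marginal. *)

From HB Require Import structures.
From mathcomp Require Import all_boot all_order all_algebra.
From mathcomp Require Import all_classical all_reals all_analysis.
Import Order.TTheory GRing.Theory Num.Theory.
Local Open Scope classical_set_scope.
Local Open Scope ring_scope.

Lemma measurable_preimageT d d' (X : measurableType d) (Y : measurableType d')
    (p : X -> Y) (A : set Y) :
  measurable_fun setT p -> measurable A -> measurable (p @^-1` A).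
Proof. by move=> mp mA; rewrite -[_ @^-1` _]setTI; apply: mp. Qed.

Section pushforward_semiconj.
Context d d' (X : measurableType d) (Y : measurableType d') (R : realType).
Variables (g : X -> X) (h : Y -> Y) (p : X -> Y).
Hypotheses (mp : measurable_fun setT p) (pg_hp : p \o g = h \o p).

Lemma preimage_semiconj (A : set Y) :
  g @^-1` (p @^-1` A) = p @^-1` (h @^-1` A).
Proof. by rewrite -comp_preimage pg_hp. Qed.

Lemma pushforward_invariant (mu : set X -> \bar R) :
  measure_invariant g mu -> measure_invariant h (pushforward mu p).
Proof.
move=> mu_inv A mA; rewrite /pushforward -preimage_semiconj mu_inv //.
exact: measurable_preimageT.
Qed.

Lemma pushforward_ergodic (mu : set X -> \bar R) :
  measure_ergodic g mu -> measure_ergodic h (pushforward mu p).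
Proof.
move=> mu_erg A mA hA; apply: mu_erg; first exact: measurable_preimageT.
by rewrite preimage_semiconj hA.
Qed.

End pushforward_semiconj.

Lemma eq_pushforward_comp d1 d2 d3 (X : measurableType d1)
    (Y : measurableType d2) (Z : measurableType d3) (R : realType)
    (mu : set X -> \bar R) (nu : set Y -> \bar R) (q : X -> Y) (r : Y -> Z) :
  measurable_fun setT r ->
  (forall B, measurable B -> pushforward mu q B = nu B) ->
  forall A, measurable A -> pushforward mu (r \o q) A = pushforward nu r A.
Proof.
by move=> mr mu_q A mA; rewrite /pushforward -mu_q //; apply: measurable_preimageT.
Qed.

Section preimage_sigma_algebra.
Context d d' (X : measurableType d) (T : pointedType) (T' : measurableType d').
Variable v : T -> T'.

Lemma measurable_preimageType_val :
  measurable_fun setT (v : g_sigma_algebra_preimageType v -> T').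
Proof. by move=> _ B mB; exists B. Qed.

Lemma measurable_fun_into_preimageType (q : X -> g_sigma_algebra_preimageType v) :
  measurable_fun setT (v \o q) -> measurable_fun setT q.
Proof. by move=> mvq _ _ [B mB <-]; rewrite setTI -comp_preimage; apply: mvq. Qed.

End preimage_sigma_algebra.

Lemma measurable_cylinder (S : pointedType) (k : int) (a : S) :
  measurable ([set x | x k = a] : set (fullshift S)).
Proof. by apply: sub_sigma_algebra; exists k, a. Qed.

Lemma measurable_fun_into_fullshift d (X : measurableType d) (S : pointedType)
    (q : X -> fullshift S) :
  (forall k a, measurable (q @^-1` [set x | x k = a])) -> measurable_fun setT q.
Proof.
move=> mq; apply: (@measurability _ _ _ _ setT q (@cylinders S)) => //.
by move=> _ [_ [k [a ->]] <-]; rewrite setTI.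
Qed.

Lemma measurable_Refl (R : realType) : measurable_fun setT (@Refl R).
Proof.
apply: measurable_fun_into_preimageType.
rewrite (_ : _ \o _ = (fun y : R => 1 - y) \o (fun x : I01 R => sval x)) //.
apply: measurableT_comp; last exact: measurable_preimageType_val.
exact: measurable_realfun.measurable_funB.
Qed.

Definition bar_map (n : nat) (x : fullshift2 n) : SigmaN n := fun k => bar (x k).

Lemma measurable_bar_map (n : nat) : measurable_fun setT (@bar_map n).
Proof.
apply: measurable_fun_into_fullshift => k a.
rewrite (_ : _ @^-1` _ = [set x | x k = inl a] `|` [set x | x k = inr a]).
  by apply: measurableU; apply: measurable_cylinder.
apply/seteqP; split=> x; rewrite /bar_map /=.
  by case: (x k) => i <-; [left|right].
by case=> ->.
Qed.

Lemma measurable_piA (n : nat) (P : Alph n -> bool) : measurable_fun setT (@piA n P).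
Proof.
apply: (measurableT_comp (@measurable_bar_map n)).
exact: measurable_preimageType_val.
Qed.

Lemma ReflK (R : realType) : involutive (@Refl R).
Proof. by move=> [x hx]; apply: val_inj => /=; rewrite subKr. Qed.

Section skew_products.
Variables (R : realType) (n : nat) (f : Alph n -> I01 R -> I01 R).

Lemma measurable_inC : measurable_fun setT (@inC R n f).
Proof.
apply: (measurable_fun_bool true); rewrite setTI.
rewrite (_ : _ @^-1` _ = (fun w : SigmaA (IP f) => sval w) @^-1`
                           \bigcup_k [set x | x 0 = inl (inord k)]).
  rewrite -[X in measurable X]setTI; apply: measurable_preimageType_val => //.
  by apply: bigcup_measurable => k _; apply: measurable_cylinder.
apply/seteqP; split=> w; rewrite /inC /=.
  by case E: (sval w 0) => [i|//] _; exists (nat_of_ord i) => //=; rewrite E inord_val.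
by case=> k _ ->.
Qed.

Lemma PiMapE (z : SigmaA (IP f) * I01 R) :
  PiMap z = (piA z.1, if inC z.1 then z.2 else Refl z.2).
Proof. by rewrite /PiMap; case: inC. Qed.

Lemma fst_PiMap : piA (P := IP f) \o fst = fst \o @PiMap R n f.
Proof. by apply: funext => z /=; rewrite PiMapE. Qed.

Lemma measurable_PiMap : measurable_fun setT (@PiMap R n f).
Proof.
rewrite (_ : @PiMap R n f = fun z => (piA z.1, if inC z.1 then z.2 else Refl z.2)).
  apply: measurable_fun_pair.
    by apply: measurableT_comp; [exact: measurable_piA | exact: measurable_fst].
  apply: measurable_fun_ifT.
  - by apply: measurableT_comp; [exact: measurable_inC | exact: measurable_fst].
  - exact: measurable_snd.
  - by apply: measurableT_comp; [exact: measurable_Refl | exact: measurable_snd].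
by apply: funext => z; rewrite PiMapE.
Qed.

(* Of the eight cases (w_0, w_1, orientation of f_(w_0)), admissibility of w_0 w_1
   discards those where the reflections on both sides would not match. *)
Lemma PiMap_semiconj : @PiMap R n f \o @Gmap R n f = Fmap f \o @PiMap R n f.
Proof.
apply: funext => -[[w w_adm] x]; move/asboolP: (w_adm) => /(_ 0).
rewrite /PiMap /Gmap /Fmap /inC /piA /=.
case w0: (w 0) => [i|i]; case: (w (0 + 1)) => j /=; rewrite /gmap;
  case: (IP f i) => //= _; rewrite ?ReflK ?w0 //.
Qed.

End skew_products.

Theorem lemma3p14 (R : realType) (n : nat)
  (f : Alph n -> I01 R -> I01 R)
  (hf : forall i, C1_diffeo_onto_image (f i)) :
  (piA (P := IP f) \o fst = fst \o @PiMap R n f) /\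
  (forall (lambda0 : probability (SigmaN n) R)
          (lambda : probability (SigmaA (IP f)) R)
          (mu : probability (SigmaA (IP f) * I01 R)%type R),
     (forall A, measurable A -> pushforward lambda (@piA n (IP f)) A = lambda0 A) ->
     measure_invariant (@Gmap R n f) mu ->
     measure_ergodic (@Gmap R n f) mu ->
     (forall A, measurable A -> pushforward mu fst A = lambda A) ->
     [/\ measurable_fun setT (@PiMap R n f),
         pushforward mu (@PiMap R n f) setT = 1%E,
         measure_invariant (@Fmap R n f) (pushforward mu (@PiMap R n f)),
         measure_ergodic (@Fmap R n f) (pushforward mu (@PiMap R n f)) &
         (forall A, measurable A ->
            pushforward (pushforward mu (@PiMap R n f)) fst A = lambda0 A)]).
Proof.
(* Only the orientations of the f_i matter. *)
split; first exact: fst_PiMap.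
move=> lambda0 lambda mu pi_lambda mu_inv mu_erg fst_mu.
have mPi := @measurable_PiMap R n f.
split=> //.
- by rewrite /pushforward preimage_setT probability_setT.
- exact: pushforward_invariant mPi (@PiMap_semiconj R n f) _ mu_inv.
- exact: pushforward_ergodic mPi (@PiMap_semiconj R n f) _ mu_erg.
- move=> A mA; rewrite -[LHS]/(pushforward mu (fst \o @PiMap R n f) A).
  rewrite -fst_PiMap -pi_lambda //.
  by apply: eq_pushforward_comp mA; [exact: measurable_piA | exact: fst_mu].
Qed.
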